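(* Let $f$ be a norm on $\mathbb{R}^n$, $g$ a norm on $\mathbb{R}^m$, let $\lambda_1,\lambda_2,\alpha_{\bm{x}},\alpha_{\bm{v}}>0$, and let $C>0$ be an absolute constant. Define the cone $$\mathcal{C}(\lambda_1,\lambda_2)=\big\{(\bm{a},\bm{b})\in\mathbb{R}^n\times\mathbb{R}^m:\lambda_1f(\bm{a})+\lambda_2g(\bm{b})\le C\lambda_1\alpha_{\bm{x}}\|\bm{a}\|_2+C\lambda_2\alpha_{\bm{v}}\|\bm{b}\|_2\big\}$$ and $\mathcal{C}^*=\mathcal{C}(\lambda_1,\lambda_2)\cap\mathbb{S}^{n+m-1}$. Then $$\omega(\mathcal{C}^* )\lesssim\Big(\alpha_{\bm{x}}+\frac{\lambda_2\alpha_{\bm{v}}}{\lambda_1}\Big)\omega(\mathbb{B}_f^n)+\Big(\alpha_{\bm{v}}+\frac{\lambda_1\alpha_{\bm{x}}}{\lambda_2}\Big)\omega(\mathbb{B}_g^m).$$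
   Context: $\mathbb{B}_f^n=\{\bm{x}\in\mathbb{R}^n:f(\bm{x})\le1\}$, $\mathbb{B}_g^m$ similarly; $\mathbb{S}^{p-1}$ the Euclidean unit sphere. Gaussian width $\omega(\mathcal{K})=\mathbb{E}\sup_{\bm{x}\in\mathcal{K}}\langle\bm{g},\bm{x}\rangle$, $\bm{g}$ standard Gaussian. $A\lesssim B$ means $A\le C'B$ for an absolute constant $C'$. *)

From HB Require Import structures.
From mathcomp Require Import all_boot all_order all_algebra.
From mathcomp Require Import all_classical all_reals all_analysis.
Set Implicit Arguments. Unset Strict Implicit. Unset Printing Implicit Defensive.
Import Order.TTheory GRing.Theory Num.Theory.
Local Open Scope classical_set_scope.
Local Open Scope ring_scope.

Section Defs.
Variable R : realType.

Definition dotv (k : nat) (x y : 'rV[R]_k) : R := \sum_(i < k) x ord0 i * y ord0 i.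
Definition norm2 (k : nat) (x : 'rV[R]_k) : R := Num.sqrt (dotv x x).

Definition is_norm (k : nat) (f : 'rV[R]_k -> R) : Prop :=
  [/\ forall x, 0 <= f x,
      forall x, f x = 0 -> x = 0,
      forall (a : R) x, f (a *: x) = `|a| * f x &
      forall x y, f (x + y) <= f x + f y].

Definition unit_ball (k : nat) (f : 'rV[R]_k -> R) : set 'rV[R]_k := [set x | f x <= 1].

Definition unit_sphere (k : nat) : set 'rV[R]_k := [set x | norm2 x = 1].

Definition std_gaussian_vec d (T : measurableType d) (P : probability T R)
    (k : nat) (G : T -> 'rV[R]_k) : Prop :=
  [/\ forall i : 'I_k, measurable_fun setT (fun t => G t ord0 i),
      forall (i : 'I_k) (A : set R), measurable A ->
        P ((fun t => G t ord0 i) @^-1` A) = normal_prob 0 1 A &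
      forall B : 'I_k -> set R, (forall i, measurable (B i)) ->
        P (\bigcap_i ((fun t => G t ord0 i) @^-1` B i))
        = (\prod_(i < k) P ((fun t => G t ord0 i) @^-1` B i))%E].

Definition gaussian_width d (T : measurableType d) (P : probability T R)
    (k : nat) (G : T -> 'rV[R]_k) (K : set 'rV[R]_k) : \bar R :=
  (\int[P]_t ereal_sup [set (dotv (G t) x)%:E | x in K])%E.

(* the cone C(l1,l2) in R^n x R^m = R^(n+m), (a,b) = row_mx a b *)
Definition cone_set (n m : nat) (f : 'rV[R]_n -> R) (g : 'rV[R]_m -> R)
    (C l1 l2 ax av : R) : set 'rV[R]_(n + m) :=
  [set z | l1 * f (lsubmx z) + l2 * g (rsubmx z)
           <= C * l1 * ax * norm2 (lsubmx z) + C * l2 * av * norm2 (rsubmx z)].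

End Defs.

From HB Require Import structures.
From mathcomp Require Import all_boot all_order all_algebra.
From mathcomp Require Import all_classical all_reals all_analysis measurable_realfun.
From mathcomp Require Import lra ring.
Set Implicit Arguments.
Unset Strict Implicit.
Unset Printing Implicit Defensive.
Import Order.TTheory GRing.Theory Num.Theory.
Local Open Scope classical_set_scope.
Local Open Scope ring_scope.

(* On the cone, lambda1 f(a) + lambda2 g(b) <= C lambda1 ax |a| + C lambda2 av |b| with
   |a|, |b| <= 1 (we are on the sphere) forces f(a) <= C (ax + lambda2 av / lambda1) and
   g(b) <= C (av + lambda1 ax / lambda2).  Hence <G, (a, b)> is bounded by these constants
   times the support functions h_f(G_a), h_g(G_b) of the two unit balls, and taking
   expectations gives the claim with C' = C, because the blocks G_a, G_b of a standard
   Gaussian vector are standard Gaussian vectors.  The measure-theoretic content is that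
   h_f(G) is measurable (the rational points of B_f are dense in it, so h_f is a countable
   supremum) and that its expectation only depends on the law of G, which is determined by
   its values on cylinders. *)

(* [f1] need not be measurable: the supremum over the cone is never shown to be. *)
Lemma le_integral_dominated (R : realType) d (T : measurableType d)
    (mu : {measure set T -> \bar R}) (f1 f2 : T -> \bar R) :
  (forall x, 0 <= f2 x)%E -> (forall x, f1 x <= f2 x)%E ->
  (\int[mu]_x f1 x <= \int[mu]_x f2 x)%E.
Proof.
move=> f2_ge0 f12; rewrite (integralE mu setT f1).
apply: (@le_trans _ _ (\int[mu]_x f1^\+ x)%E).
  have f1neg_ge0 : (0 <= \int[mu]_x f1^\- x)%E.
    by apply: integral_ge0 => x _; exact: funeneg_ge0.
  by apply: le_trans (leeB (lexx _) f1neg_ge0) _; rewrite sube0.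
rewrite ge0_integralTE // [leRHS]ge0_integralTE //.
apply: ereal_sup_le => _ [h hf1 <-]; exists h => //= x.
apply: le_trans (hf1 x) _; rewrite funeposE ge_max f2_ge0 andbT.
exact: f12.
Qed.

Lemma ge0_integral_lincomb (R : realType) d (T : measurableType d)
    (mu : {measure set T -> \bar R}) (a b : R) (f1 f2 : T -> \bar R) :
  0 <= a -> 0 <= b -> (forall x, 0 <= f1 x)%E -> (forall x, 0 <= f2 x)%E ->
  measurable_fun setT f1 -> measurable_fun setT f2 ->
  (\int[mu]_x (a%:E * f1 x + b%:E * f2 x) = a%:E * \int[mu]_x f1 x + b%:E * \int[mu]_x f2 x)%E.
Proof.
move=> a0 b0 f1_ge0 f2_ge0 mf1 mf2.
rewrite ge0_integralD //; last 4 first.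
- by move=> x _; rewrite mule_ge0.
- exact: measurable_funeM.
- by move=> x _; rewrite mule_ge0.
- exact: measurable_funeM.
by rewrite !ge0_integralZl.
Qed.

Section Dot.
Variables (R : realType) (k : nat).
Implicit Types x u v : 'rV[R]_k.

Lemma dotvD x u v : dotv x (u + v) = dotv x u + dotv x v.
Proof. by rewrite /dotv -big_split; apply: eq_bigr => i _; rewrite mxE mulrDr. Qed.

Lemma dotvZ x c u : dotv x (c *: u) = c * dotv x u.
Proof. by rewrite /dotv mulr_sumr; apply: eq_bigr => i _; rewrite mxE mulrCA. Qed.

Lemma dotv0 x : dotv x 0 = 0.
Proof. by rewrite -(scale0r (0 : 'rV[R]_k)) dotvZ mul0r. Qed.

Lemma dotvv_ge0 x : 0 <= dotv x x.
Proof. by apply: sumr_ge0 => i _; rewrite -expr2 sqr_ge0. Qed.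

Lemma dotv_coord_lipschitz x : exists2 S, 0 <= S &
  forall v eta, (forall i, `|v ord0 i| <= eta) -> - (eta * S) <= dotv x v.
Proof.
exists (\sum_i `|x ord0 i|) => [|v eta hv]; first exact: sumr_ge0.
rewrite /dotv mulr_sumr -sumrN; apply: ler_sum => i _.
rewrite lerNl; apply: le_trans (ler_norm _) _.
by rewrite normrN normrM mulrC ler_wpM2r.
Qed.

End Dot.

Lemma dotv_row_split (R : realType) n m (x z : 'rV[R]_(n + m)) :
  dotv x z = dotv (lsubmx x) (lsubmx z) + dotv (rsubmx x) (rsubmx z).
Proof. by rewrite /dotv big_split_ord; congr (_ + _); apply: eq_bigr => i _; rewrite !mxE. Qed.

Lemma unit_sphere_submx_le1 (R : realType) n m (z : 'rV[R]_(n + m)) :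
  unit_sphere z -> norm2 (lsubmx z) <= 1 /\ norm2 (rsubmx z) <= 1.
Proof.
rewrite /unit_sphere /norm2 /= -sqrtr1 => /eqP; rewrite eqr_sqrt ?dotvv_ge0 //.
rewrite dotv_row_split => /eqP zz1.
have := dotvv_ge0 (lsubmx z); have := dotvv_ge0 (rsubmx z).
by rewrite !ler_sqrt //; split; lra.
Qed.

Definition support_fun (R : realType) k (f : 'rV[R]_k -> R) (x : 'rV[R]_k) : \bar R :=
  ereal_sup [set (dotv x y)%:E | y in unit_ball f].

Definition ratv (R : realType) k (q : 'rV[rat]_k) : 'rV[R]_k := map_mx ratr q.
Arguments ratv {R k} q.

Definition ratv_ball_seq (R : realType) k (f : 'rV[R]_k -> R) (n : nat) : 'rV[R]_k :=
  if unpickle n is Some q then (if f (ratv q) <= 1 then ratv q else 0) else 0.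

Lemma ratv_approx (R : realType) k (y : 'rV[R]_k) eta : 0 < eta ->
  exists q, forall i, `|(ratv q - y) ord0 i| <= eta.
Proof.
move=> eta0.
have /fin_all_exists [r hr] : forall i, exists r : rat, `|ratr r - y ord0 i| <= eta.
  move=> i; have [r] := @rat_in_itvoo R (y ord0 i - eta) (y ord0 i + eta) ltac:(lra).
  rewrite in_itv /= => /andP [lo hi]; exists r; rewrite ler_norml; apply/andP; split; lra.
by exists (\row_i r i) => i; rewrite !mxE.
Qed.

Section Norm.
Variables (R : realType) (k : nat) (f : 'rV[R]_k -> R).
Hypothesis hf : is_norm f.
Implicit Types (x v : 'rV[R]_k) (eta : R).

Lemma is_norm_ge0 x : 0 <= f x.
Proof. by case: hf. Qed.

Lemma is_normZ a x : f (a *: x) = `|a| * f x.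
Proof. by case: hf. Qed.

Lemma is_norm0 : f 0 = 0.
Proof. by rewrite -(scale0r (0 : 'rV[R]_k)) is_normZ normr0 mul0r. Qed.

Lemma is_norm_sum I (s : seq I) (P : pred I) (F : I -> 'rV[R]_k) :
  f (\sum_(i <- s | P i) F i) <= \sum_(i <- s | P i) f (F i).
Proof.
elim/big_rec2: _ => [|i y1 y2 _ h]; first by rewrite is_norm0.
case: hf => _ _ _ /(_ (F i) y2) fD; apply: le_trans fD _; by rewrite lerD2l.
Qed.

Lemma is_norm_coord_lipschitz : exists2 S, 0 <= S &
  forall v eta, (forall i, `|v ord0 i| <= eta) -> f v <= eta * S.
Proof.
exists (\sum_i f (delta_mx 0 i)) => [|v eta hv].
  by apply: sumr_ge0 => i _; exact: is_norm_ge0.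
rewrite {1}(row_sum_delta v) mulr_sumr.
apply: le_trans (is_norm_sum _ _ _) _; apply: ler_sum => i _.
by rewrite is_normZ ler_wpM2r ?is_norm_ge0.
Qed.

Lemma ball_interior_ratv_approx x y e : f y < 1 -> 0 < e ->
  exists q, f (ratv q) <= 1 /\ dotv x y - e <= dotv x (ratv q).
Proof.
move=> fy1 e0.
have [S S0 fS] := is_norm_coord_lipschitz; have [Sx Sx0 xS] := dotv_coord_lipschitz x.
set t := (1 - f y) / (S + 1); set w := e / (Sx + 1).
have tE : t * S + t = 1 - f y by rewrite -{2}[t]mulr1 -mulrDr divfK //; lra.
have wE : w * Sx + w = e by rewrite -{2}[w]mulr1 -mulrDr divfK //; lra.
have t0 : 0 < t by rewrite divr_gt0 //; lra.
have w0 : 0 < w by rewrite divr_gt0 //; lra.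
have eta0 : 0 < Num.min t w by rewrite lt_min t0 w0.
have [q hq] := ratv_approx y eta0.
exists q; split.
- have fqy := fS _ _ hq.
  case: hf => _ _ _ /(_ y (ratv q - y)); rewrite [y + _]addrC subrK => fq.
  have : Num.min t w * S <= t * S by rewrite ler_wpM2r // ge_min lexx.
  lra.
- have xqy := xS _ _ hq.
  have -> : dotv x (ratv q) = dotv x y + dotv x (ratv q - y).
    by rewrite -dotvD [y + _]addrC subrK.
  have : Num.min t w * Sx <= w * Sx by rewrite ler_wpM2r // ge_min lexx orbT.
  lra.
Qed.

Lemma ball_ratv_approx x y e : f y <= 1 -> 0 < e ->
  exists q, f (ratv q) <= 1 /\ dotv x y - e <= dotv x (ratv q).
Proof.
move=> fy1 e0.
set a := `|dotv x y|; have a0 : 0 <= a := normr_ge0 _.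
set u := e / (2 * (a + 1)).
have uE : u * (2 * (a + 1)) = e by rewrite divfK //; lra.
have u0 : 0 < u by rewrite divr_gt0 //; lra.
set s := Num.min 1 u.
have s0 : 0 < s by rewrite lt_min ltr01.
have s1 : s <= 1 by rewrite ge_min lexx.
have su : s <= u by rewrite ge_min lexx orbT.
have fsy : f ((1 - s) *: y) < 1.
  rewrite is_normZ ger0_norm; last by lra.
  by have := is_norm_ge0 y; nra.
have e20 : 0 < e / 2 by lra.
have [q [fq hq]] := ball_interior_ratv_approx x fsy e20.
exists q; split=> //; rewrite dotvZ in hq.
have : dotv x y <= a by exact: ler_norm.
nra.
Qed.

Lemma ratv_ball_seq_in n : f (ratv_ball_seq f n) <= 1.
Proof.
rewrite /ratv_ball_seq; case: unpickle => [q|]; last by rewrite is_norm0.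
by case: ifPn => // _; rewrite is_norm0.
Qed.

Lemma support_fun_ge0 x : (0 <= support_fun f x)%E.
Proof.
apply: ereal_sup_ubound; exists 0; last by rewrite dotv0.
by rewrite /unit_ball /= is_norm0.
Qed.

Lemma support_funE x :
  support_fun f x = esups (fun n => (dotv x (ratv_ball_seq f n))%:E) 0.
Proof.
apply/eqP; rewrite eq_le; apply/andP; split.
- apply: ge_ereal_sup => _ [y fy1 <-]; apply/lee_subgt0Pr => e e0.
  have [q [fq1 hq]] := ball_ratv_approx x fy1 e0.
  apply: le_trans (ereal_sup_ubound _); last by exists (pickle q).
  by rewrite /ratv_ball_seq pickleK fq1 -EFinB lee_fin.
- apply: ge_ereal_sup => _ [n _ <-]; apply: ereal_sup_ubound.
  by exists (ratv_ball_seq f n) => //; exact: ratv_ball_seq_in.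
Qed.

Lemma dotv_le_support_fun x y c : 0 < c -> f y <= c ->
  ((dotv x y)%:E <= c%:E * support_fun f x)%E.
Proof.
move=> c0 fyc.
have -> : dotv x y = c * dotv x (c^-1 *: y) by rewrite dotvZ mulrA divff ?mul1r ?gt_eqF.
rewrite EFinM; apply: lee_wpmul2l; first by rewrite lee_fin ltW.
apply: ereal_sup_ubound.
exists (c^-1 *: y) => //; rewrite /unit_ball /= is_normZ ger0_norm ?invr_ge0 ?(ltW c0) //.
by rewrite mulrC ler_pdivrMr // mul1r.
Qed.

End Norm.

(* Row vectors with the product sigma-algebra, generated by measurable cylinders; the alias
   [rowvec] carries the pointed instance required by [g_sigma_algebraType]. *)
Definition rowvec (R : realType) (k : nat) := 'rV[R]_k.
HB.instance Definition _ (R : realType) (k : nat) := Choice.on (rowvec R k).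
HB.instance Definition _ (R : realType) (k : nat) := isPointed.Build (rowvec R k) 0.

Definition cylinders (R : realType) (k : nat) : set (set (rowvec R k)) :=
  [set A | exists2 B : 'I_k -> set R, (forall i, measurable (B i)) &
     A = \bigcap_i ((fun x : 'rV[R]_k => x ord0 i) @^-1` B i)].

Definition cylinder_space (R : realType) (k : nat) := g_sigma_algebraType (@cylinders R k).

Section CylinderSpace.
Variables (R : realType) (k : nat).
Local Notation V := (cylinder_space R k).

Lemma measurable_coord (i : 'I_k) : measurable_fun setT (fun x : V => x ord0 i).
Proof.
move=> _ B mB; rewrite setTI; apply: sub_sigma_algebra.
exists (fun j => if j == i then B else setT) => [j|]; first by case: ifP.
apply/seteqP; split=> x /= => [Bx j _|/(_ i I)]; last by rewrite eqxx.
by case: ifPn => [/eqP -> //|].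
Qed.

Lemma measurable_dotv (v : 'rV[R]_k) : measurable_fun setT (fun x : V => dotv x v).
Proof.
apply: measurable_sum => i; apply: measurable_funM => //; exact: measurable_coord.
Qed.

Lemma measurable_support_fun (f : 'rV[R]_k -> R) : is_norm f ->
  measurable_fun setT (support_fun f : V -> \bar R).
Proof.
move=> hf; rewrite (funext (support_funE hf)).
apply: (measurable_fun_esups (f := fun n (x : V) => (dotv x (ratv_ball_seq f n))%:E)) => n.
by apply/measurable_EFinP; exact: measurable_dotv.
Qed.

Lemma measurable_to_cylinder_space d (T : measurableType d) (X : T -> 'rV[R]_k) :
  (forall i, measurable_fun setT (fun t => X t ord0 i)) -> measurable_fun setT (X : T -> V).
Proof.
move=> mX; apply: (@measurability _ _ _ V _ _ (@cylinders R k)) => //.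
move=> _ [_ [B mB ->] <-]; rewrite setTI preimage_bigcap.
apply: fin_bigcap_measurable => // i _; rewrite -[X in measurable X]setTI; exact: mX.
Qed.

Lemma ge0_integral_eq_of_cylinders
    d0 (T0 : measurableType d0) (P0 : probability T0 R) (X0 : T0 -> 'rV[R]_k)
    d1 (T1 : measurableType d1) (P1 : probability T1 R) (X1 : T1 -> 'rV[R]_k) :
  (forall i, measurable_fun setT (fun t => X0 t ord0 i)) ->
  (forall i, measurable_fun setT (fun t => X1 t ord0 i)) ->
  (forall B : 'I_k -> set R, (forall i, measurable (B i)) ->
     P0 (\bigcap_i ((fun t => X0 t ord0 i) @^-1` B i)) =
     P1 (\bigcap_i ((fun t => X1 t ord0 i) @^-1` B i))) ->
  forall F : V -> \bar R, measurable_fun setT F -> (forall x, 0 <= F x)%E ->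
  (\int[P0]_t F (X0 t) = \int[P1]_t F (X1 t))%E.
Proof.
move=> /measurable_to_cylinder_space mX0 /measurable_to_cylinder_space mX1 PX01 F mF F0.
have := ge0_integral_pushforward mX0 P0 measurableT mF (fun y _ => F0 y).
have := ge0_integral_pushforward mX1 P1 measurableT mF (fun y _ => F0 y).
rewrite !preimage_setT => <- <-.
have cyl_setI : setI_closed (@cylinders R k).
  move=> _ _ [B1 mB1 ->] [B2 mB2 ->]; exists (fun i => B1 i `&` B2 i) => [i|].
    exact: measurableI.
  by rewrite -bigcapI.
have cyl_setT : forall n : nat, @cylinders R k setT.
  move=> _; exists (fun=> setT) => //.
  by apply/seteqP; split=> x // _ i _.
apply: eq_measure_integral => A mA _.
have cyl_cover : \bigcup_(n : nat) (setT : set V) = setT by rewrite bigcup_const.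
apply: (measure_unique (@cylinders R k : set (set V)) _ erefl cyl_setI cyl_setT cyl_cover) => //.
- by move=> _ [B mB ->]; rewrite /= /pushforward !preimage_bigcap; exact: PX01.
- by move=> _; rewrite /= /pushforward preimage_setT probability_setT ltry.
Qed.

End CylinderSpace.

Section GaussianVectors.
Variables (R : realType) (d : measure_display) (T : measurableType d).
Variable P : probability T R.

Lemma std_gaussian_vec_cylinder k (G : T -> 'rV[R]_k) : std_gaussian_vec P G ->
  forall B : 'I_k -> set R, (forall i, measurable (B i)) ->
  P (\bigcap_i ((fun t => G t ord0 i) @^-1` B i)) = (\prod_(i < k) normal_prob 0 1 (B i))%E.
Proof. by case=> _ lawG indG B mB; rewrite indG //; apply: eq_bigr => i _; exact: lawG. Qed.

Lemma measurable_support_fun_gaussian k (G : T -> 'rV[R]_k) (f : 'rV[R]_k -> R) :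
  is_norm f -> std_gaussian_vec P G -> measurable_fun setT (fun t => support_fun f (G t)).
Proof.
move=> hf [mG _ _].
exact: measurableT_comp (measurable_support_fun hf) (measurable_to_cylinder_space mG).
Qed.

Lemma std_gaussian_vec_reindex k n (G : T -> 'rV[R]_k) (X : T -> 'rV[R]_n)
    (h : 'I_n -> 'I_k) :
  injective h -> (forall t i, X t ord0 i = G t ord0 (h i)) ->
  std_gaussian_vec P G -> std_gaussian_vec P X.
Proof.
move=> h_inj XE [mG lawG indG].
have coordE i : (fun t => X t ord0 i) = (fun t => G t ord0 (h i)).
  by apply/funext => t; exact: XE.
split=> [i|i A mA|B mB]; rewrite ?coordE; [exact: mG | exact: lawG |].
pose B' j := if [pick i | h i == j] is Some i then B i else setT.
have mB' j : measurable (B' j) by rewrite /B'; case: pickP.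
have B'E i : B' (h i) = B i.
  by rewrite /B'; case: pickP => [i' /eqP/h_inj -> //|/(_ i)]; rewrite eqxx.
have -> : \bigcap_i ((fun t => X t ord0 i) @^-1` B i) =
          \bigcap_j ((fun t => G t ord0 j) @^-1` B' j).
  apply/seteqP; split=> t /= Bt j _.
  - rewrite /B'; case: pickP => [i /eqP <-|_] //.
    by have := Bt i I; rewrite /preimage /= XE.
  - by have := Bt (h j) I; rewrite /preimage /= B'E XE.
rewrite indG // (bigID (mem (h @: setT))) /= big_imset /=; last by move=> i j _ _; exact: h_inj.
rewrite [X in (_ * X)%E]big1 ?mule1 => [|j /imsetP noh].
  by apply: eq_big => [i|i _]; rewrite ?in_setT ?B'E ?coordE.
rewrite /B'; case: pickP => [i /eqP hij|_]; first by exfalso; apply: noh; exists i; rewrite ?in_setT ?hij.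
by rewrite preimage_setT probability_setT.
Qed.

Lemma std_gaussian_vec_lsubmx n m (G : T -> 'rV[R]_(n + m)) :
  std_gaussian_vec P G -> std_gaussian_vec P (fun t => lsubmx (G t)).
Proof. by apply: std_gaussian_vec_reindex (@lshift_inj n m) _ => t i; rewrite mxE. Qed.

Lemma std_gaussian_vec_rsubmx n m (G : T -> 'rV[R]_(n + m)) :
  std_gaussian_vec P G -> std_gaussian_vec P (fun t => rsubmx (G t)).
Proof. by apply: std_gaussian_vec_reindex (@rshift_inj n m) _ => t i; rewrite mxE. Qed.

End GaussianVectors.

Lemma gaussian_width_unit_ball (R : realType) k (f : 'rV[R]_k -> R)
    d (T : measurableType d) (P : probability T R) (G : T -> 'rV[R]_k)
    d' (T' : measurableType d') (P' : probability T' R) (G' : T' -> 'rV[R]_k) :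
  is_norm f -> std_gaussian_vec P G -> std_gaussian_vec P' G' ->
  gaussian_width P' G' (unit_ball f) = (\int[P]_t support_fun f (G t))%E.
Proof.
move=> hf hG hG'; symmetry.
apply: ge0_integral_eq_of_cylinders.
- by case: hG.
- by case: hG'.
- by move=> B mB; rewrite (std_gaussian_vec_cylinder hG mB) (std_gaussian_vec_cylinder hG' mB).
- exact: measurable_support_fun hf.
- exact: support_fun_ge0.
Qed.

Lemma cone_coord_le (R : realFieldType) (C l1 l2 ax av u v p q : R) :
  0 < l1 -> 0 <= l2 -> 0 <= C -> 0 <= ax -> 0 <= av -> 0 <= v -> p <= 1 -> q <= 1 ->
  l1 * u + l2 * v <= C * l1 * ax * p + C * l2 * av * q -> u <= C * (ax + l2 * av / l1).
Proof.
move=> l1_gt0 l2_ge0 C_ge0 ax_ge0 av_ge0 v_ge0 p1 q1 cone.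
have axp : C * l1 * ax * p <= C * l1 * ax by rewrite ler_piMr // !mulr_ge0 // ltW.
have avq : C * l2 * av * q <= C * l2 * av by rewrite ler_piMr // !mulr_ge0.
have l2v : 0 <= l2 * v by rewrite mulr_ge0.
rewrite -(ler_pM2l l1_gt0).
have -> : l1 * (C * (ax + l2 * av / l1)) = C * l1 * ax + C * l2 * av.
  by field; rewrite gt_eqF.
lra.
Qed.

Lemma cone_sphere_dotv_le (R : realType) n m (f : 'rV[R]_n -> R) (g : 'rV[R]_m -> R)
    (C l1 l2 ax av : R) (x z : 'rV[R]_(n + m)) :
  is_norm f -> is_norm g -> 0 < C -> 0 < l1 -> 0 < l2 -> 0 < ax -> 0 < av ->
  (cone_set f g C l1 l2 ax av `&` @unit_sphere R (n + m)%N) z ->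
  ((dotv x z)%:E <= (C * (ax + l2 * av / l1))%:E * support_fun f (lsubmx x)
                    + (C * (av + l1 * ax / l2))%:E * support_fun g (rsubmx x))%E.
Proof.
move=> hf hg C_gt0 l1_gt0 l2_gt0 ax_gt0 av_gt0 [cone /unit_sphere_submx_le1 [zl1 zr1]].
rewrite dotv_row_split EFinD; apply: leeD; apply: dotv_le_support_fun => //.
- by rewrite mulr_gt0 // addr_gt0 // !divr_gt0 // mulr_gt0.
- exact: cone_coord_le l1_gt0 (ltW l2_gt0) (ltW C_gt0) (ltW ax_gt0) (ltW av_gt0)
    (is_norm_ge0 hg _) zl1 zr1 cone.
- by rewrite mulr_gt0 // addr_gt0 // !divr_gt0 // mulr_gt0.
- apply: cone_coord_le l2_gt0 (ltW l1_gt0) (ltW C_gt0) (ltW av_gt0) (ltW ax_gt0)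
    (is_norm_ge0 hf (lsubmx z)) zr1 zl1 _.
  by rewrite addrC [leRHS]addrC; exact: cone.
Qed.

Theorem propositionA8 (R : realType) (C : R) (hC : 0 < C) :
  exists C' : R, 0 < C' /\
  forall (n m : nat) (f : 'rV[R]_n -> R) (g : 'rV[R]_m -> R)
         (l1 l2 ax av : R),
    is_norm f -> is_norm g ->
    0 < l1 -> 0 < l2 -> 0 < ax -> 0 < av ->
    forall (d0 : measure_display) (T0 : measurableType d0) (P0 : probability T0 R)
           (G0 : T0 -> 'rV[R]_(n + m))
           (d1 : measure_display) (T1 : measurableType d1) (P1 : probability T1 R)
           (G1 : T1 -> 'rV[R]_n)
           (d2 : measure_display) (T2 : measurableType d2) (P2 : probability T2 R)
           (G2 : T2 -> 'rV[R]_m),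
    std_gaussian_vec P0 G0 -> std_gaussian_vec P1 G1 -> std_gaussian_vec P2 G2 ->
    (gaussian_width P0 G0 (cone_set f g C l1 l2 ax av `&` @unit_sphere R (n + m)%N)
     <= C'%:E * ((ax + l2 * av / l1)%:E * gaussian_width P1 G1 (unit_ball f)
                 + (av + l1 * ax / l2)%:E * gaussian_width P2 G2 (unit_ball g)))%E.
Proof.
exists C; split=> // n m f g l1 l2 ax av hf hg l1_gt0 l2_gt0 ax_gt0 av_gt0
  d0 T0 P0 G0 d1 T1 P1 G1 d2 T2 P2 G2 hG0 hG1 hG2.
have hGl := std_gaussian_vec_lsubmx hG0; have hGr := std_gaussian_vec_rsubmx hG0.
rewrite (gaussian_width_unit_ball hf hGl hG1) (gaussian_width_unit_ball hg hGr hG2).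
set a := ax + l2 * av / l1; set b := av + l1 * ax / l2.
have a_gt0 : 0 < a by rewrite /a addr_gt0 // !mulr_gt0 // invr_gt0.
have b_gt0 : 0 < b by rewrite /b addr_gt0 // !mulr_gt0 // invr_gt0.
have Ca_ge0 : 0 <= C * a := ltW (mulr_gt0 hC a_gt0).
have Cb_ge0 : 0 <= C * b := ltW (mulr_gt0 hC b_gt0).
have supf_ge0 := support_fun_ge0 hf; have supg_ge0 := support_fun_ge0 hg.
have If_ge0 : (0 <= \int[P0]_t support_fun f (lsubmx (G0 t)))%E by exact: integral_ge0.
have Ig_ge0 : (0 <= \int[P0]_t support_fun g (rsubmx (G0 t)))%E by exact: integral_ge0.
rewrite ge0_muleDr ?mule_ge0 ?lee_fin ?(ltW a_gt0) ?(ltW b_gt0) //.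
rewrite !muleA -!EFinM.
rewrite -ge0_integral_lincomb //; last 2 first.
- exact: measurable_support_fun_gaussian hGl.
- exact: measurable_support_fun_gaussian hGr.
apply: le_integral_dominated => t; first by rewrite adde_ge0 ?mule_ge0.
by apply: ge_ereal_sup => _ [z zK <-]; exact: cone_sphere_dotv_le.
Qed.
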